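(* Let $\mathcal{R}$ be a tolerance relation on $X=\{1,\dots,n\}$ with chordal graph $G(\mathcal{R})$ and set of maximal cliques $\mathcal{C}$. A nonzero element $(x_{ij})\in E(\mathcal{R})^d_+$ generates an extremal ray of the cone $E(\mathcal{R})^d_+$ if and only if both of the following hold: (1) for every $C\in\mathcal{C}$ the matrix $(x_{ij})_{i,j\in C}$ has rank one or zero; (2) the subgraph of $G(\mathcal{R})$ induced by the vertex set $\{i\in X\mid x_{ii}\neq 0\}$ is connected.
   Context: A tolerance relation on $X=\{1,\dots,n\}$ is a reflexive symmetric relation $\mathcal{R}\subseteq X\times X$; its graph $G(\mathcal{R})$ has vertex set $X$ and an edge between distinct $i,j$ iff $(i,j)\in\mathcal{R}$. A graph is chordal if every cycle of length at least 4 has a chord. $E(\mathcal{R})=\{(x_{ij})\in M_n(\mathbb{C})\mid x_{ij}=0\text{ if }(i,j)\notin\mathcal{R}\}$. The dual $E(\mathcal{R})^d$ is identified with the vector space $E(\mathcal{R})$, with positive cone $E(\mathcal{R})^d_+=\{M\in E(\mathcal{R})\mid \exists N\in M_n(\mathbb{C})\text{ with }N_{ij}=0\text{ for all }(i,j)\in\mathcal{R},\ M+N\text{ positive semidefinite}\}$. A ray is a set $\{\lambda\varphi\mid\lambda\ge0\}$ with $0\neq\varphi$ in the cone; it is extremal if whenever $\varphi_1,\varphi_2$ are in the cone and $\varphi_1+\varphi_2$ lies in the ray, both $\varphi_1,\varphi_2$ lie in the ray. *)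

(* The field of complex numbers is modelled in the statement
   as R[i] (mathcomp-real-closed's complex construction) over R : realType.
   The definitions below are generic over a numClosedFieldType C. *)
From HB Require Import structures.
From mathcomp Require Import all_boot all_order all_algebra.
From mathcomp Require Export reals.
From mathcomp.real_closed Require Export complex.

Set Implicit Arguments.
Unset Strict Implicit.
Unset Printing Implicit Defensive.

Import Order.TTheory GRing.Theory Num.Theory.
Local Open Scope ring_scope.

Section Defs.

Variable C : numClosedFieldType.
Variable n : nat.

Definition ctrmx (M : 'M[C]_n) : 'M[C]_n := \matrix_(i, j) (M j i)^*.

Definition ctrcv (v : 'cV[C]_n) : 'rV[C]_n := \row_j (v j 0)^*.

Definition psd (M : 'M[C]_n) : Prop :=
  ctrmx M = M /\ forall v : 'cV[C]_n, 0 <= (ctrcv v *m M *m v) 0 0.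

Definition tolerance (Rl : rel 'I_n) : Prop := reflexive Rl /\ symmetric Rl.

Definition gadj (Rl : rel 'I_n) : rel 'I_n := fun i j => (i != j) && Rl i j.

(* a graph cycle given by a duplicate-free list of vertices, of length >= 4,
   consecutive (cyclically) vertices adjacent; a chord is an edge between two
   vertices of the cycle that are not consecutive on it *)
Definition has_chord (e : rel 'I_n) (s : seq 'I_n) : Prop :=
  exists x y, [/\ x \in s, y \in s, x != y &
                  [/\ y != next s x, x != next s y & e x y]].

Definition chordal (e : rel 'I_n) : Prop :=
  forall s : seq 'I_n, uniq s -> (3 < size s)%N -> cycle e s -> has_chord e s.

Definition clique (Rl : rel 'I_n) (K : {set 'I_n}) : Prop :=
  forall i j, i \in K -> j \in K -> i != j -> gadj Rl i j.

Definition maximal_clique (Rl : rel 'I_n) (K : {set 'I_n}) : Prop :=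
  clique Rl K /\ forall K', clique Rl K' -> K \subset K' -> K' = K.

Definition induced_connected (Rl : rel 'I_n) (S : {set 'I_n}) : Prop :=
  forall i j, i \in S -> j \in S ->
    connect [rel a b | [&& a \in S, b \in S & gadj Rl a b]] i j.

Definition subsq (K : {set 'I_n}) (M : 'M[C]_n) : 'M[C]_#|K| :=
  \matrix_(i, j) M (enum_val i) (enum_val j).

Definition in_E (Rl : rel 'I_n) (M : 'M[C]_n) : Prop :=
  forall i j, ~~ Rl i j -> M i j = 0.

Definition dual_cone (Rl : rel 'I_n) (M : 'M[C]_n) : Prop :=
  in_E Rl M /\
  exists N : 'M[C]_n, (forall i j, Rl i j -> N i j = 0) /\ psd (M + N).

Definition in_ray (phi psi : 'M[C]_n) : Prop :=
  exists2 l : C, 0 <= l & psi = l *: phi.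

Definition extremal_ray (K : 'M[C]_n -> Prop) (phi : 'M[C]_n) : Prop :=
  [/\ K phi, phi != 0 &
      forall p1 p2, K p1 -> K p2 -> in_ray phi (p1 + p2) ->
        in_ray phi p1 /\ in_ray phi p2].

End Defs.

(* Pick a psd completion P of x and a vertex k with x_kk <> 0.  The pivot
   part P_{.k} P_{k.} / P_kk and its Schur complement are both psd, so their
   restrictions to R split x inside the cone; for an extremal x the first
   summand is a multiple of x, and it has rank one on every clique.  Restricting x to a connected component of the support of
   its diagonal (and to the complement) is another splitting inside the cone,
   which forces connectedness.  Conversely, if every 2x2 minor of x on an edge
   vanishes, a summand p of x satisfies p_ij = (p_ii / x_ii) x_ij at every
   edge ij of the support (testing psd completions on the kernel vector
   x_ij e_i - x_ii e_j), and the ratio p_ii / x_ii propagates along edges,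
   hence is constant on the connected support. *)

From HB Require Import structures.
From mathcomp Require Import all_boot all_order all_algebra.
From mathcomp Require Import reals.
From mathcomp.real_closed Require Import complex.
From mathcomp Require Import ring.
Import Order.TTheory GRing.Theory Num.Theory.
Local Open Scope ring_scope.

Set Implicit Arguments.
Unset Strict Implicit.
Unset Printing Implicit Defensive.

Section PsdMatrices.
Variables (C : numClosedFieldType) (n : nat).
Implicit Types (M P : 'M[C]_n) (u v w : 'cV[C]_n).

Definition form M u w : C := (ctrcv u *m M *m w) 0 0.

Definition evec (m : 'I_n) : 'cV[C]_n := delta_mx m 0.

Lemma formE M u w : form M u w = \sum_a \sum_b (u a 0)^* * M a b * w b 0.
Proof.
rewrite /form mxE exchange_big /=; apply: eq_bigr => b _.
by rewrite mxE mulr_suml; apply: eq_bigr => a _; rewrite mxE.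
Qed.

Lemma formDr M u (a : C) w w' :
  form M u (a *: w + w') = a * form M u w + form M u w'.
Proof. by rewrite /form mulmxDr -scalemxAr !mxE. Qed.

Lemma formZr M u (a : C) w : form M u (a *: w) = a * form M u w.
Proof. by rewrite /form -scalemxAr mxE. Qed.

Lemma ctrcvZ (a : C) u : ctrcv (a *: u) = a^* *: ctrcv u.
Proof. by apply/rowP => j; rewrite !mxE rmorphM. Qed.

Lemma formDl M (a : C) u u' w :
  form M (a *: u + u') w = a^* * form M u w + form M u' w.
Proof.
rewrite /form; have -> : ctrcv (a *: u + u') = a^* *: ctrcv u + ctrcv u'.
  by apply/rowP => j; rewrite !mxE rmorphD rmorphM.
by rewrite mulmxDl -!scalemxAl mulmxDl -scalemxAl !mxE.
Qed.

Lemma formZl M (a : C) u w : form M (a *: u) w = a^* * form M u w.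
Proof. by rewrite /form ctrcvZ -!scalemxAl mxE. Qed.

Lemma formDm M M' u w : form (M + M') u w = form M u w + form M' u w.
Proof. by rewrite /form mulmxDr mulmxDl mxE. Qed.

Lemma formBm M M' u w : form (M - M') u w = form M u w - form M' u w.
Proof. by rewrite /form mulmxBr mulmxBl mxE [X in _ + X]mxE. Qed.

Lemma ctrmx_entry M : ctrmx M = M -> forall i j, (M i j)^* = M j i.
Proof. by move=> h i j; rewrite -{2}h mxE. Qed.

Lemma form_conj M : ctrmx M = M -> forall u w, form M w u = (form M u w)^*.
Proof.
move=> hM u w; rewrite !formE rmorph_sum.
under [RHS]eq_bigr do rewrite rmorph_sum.
rewrite [RHS]exchange_big /=; apply: eq_bigr => a _; apply: eq_bigr => b _.
by rewrite !rmorphM /= conjCK ctrmx_entry //; ring.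
Qed.

Lemma mulmx_evec M i m : (M *m evec m) i 0 = M i m.
Proof.
rewrite mxE (bigD1 m) //= big1 => [|a ham]; first by rewrite !mxE !eqxx mulr1 addr0.
by rewrite !mxE (negbTE ham) mulr0.
Qed.

Lemma form_evecl M m w : form M (evec m) w = (M *m w) m 0.
Proof.
rewrite formE [RHS]mxE (bigD1 m) //= [X in _ + X]big1 => [|a ham].
  by rewrite addr0; apply: eq_bigr => b _; rewrite !mxE !eqxx rmorph1 mul1r.
by rewrite big1 // => b _; rewrite !mxE (negbTE ham) rmorph0 !mul0r.
Qed.

Lemma form_evecr M u m : form M u (evec m) = \sum_a (u a 0)^* * M a m.
Proof.
rewrite formE; apply: eq_bigr => a _.
rewrite (bigD1 m) //= big1 => [|b hbm]; first by rewrite !mxE !eqxx mulr1 addr0.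
by rewrite !mxE (negbTE hbm) mulr0.
Qed.

Lemma form_evec M i j : form M (evec i) (evec j) = M i j.
Proof. by rewrite form_evecl mulmx_evec. Qed.

Lemma form_evec2 M i j (s t : C) :
  form M (s *: evec i + t *: evec j) (s *: evec i + t *: evec j) =
  s^* * (s * M i i + t * M i j) + t^* * (s * M j i + t * M j j).
Proof. by rewrite formDl formZl !formDr !formZr !form_evec. Qed.

Lemma psd_diag_ge0 M i : psd M -> 0 <= M i i.
Proof. by case=> _ h; rewrite -form_evec; apply: h. Qed.

Lemma psd_form0_ker M v : psd M -> form M v v = 0 -> M *m v = 0.
Proof.
move=> hM hv; have [hH hpos] := hM.
apply/colP => m; rewrite [RHS]mxE.
set b := (M *m v) m 0; set a := M m m.
have ha : 0 <= a by apply: psd_diag_ge0.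
have ha' : a^* = a by apply: geC0_conj.
pose s := a + 1.
have hs : s^* = s by apply: geC0_conj; rewrite /s addr_ge0 // ler01.
have e1 : form M (evec m) v = b by rewrite form_evecl.
have e2 : form M v (evec m) = b^* by rewrite (form_conj hH) e1.
(* the test vector (a + 1) v - b e_m has form value -|b|^2 (a + 2) *)
have := hpos (s *: v + (- b) *: evec m).
rewrite -/(form _ _ _) formDl formZl !formDr !formZr hv e1 e2 form_evec -/a hs rmorphN.
have -> : s * (s * 0 + - b * b^*) + - b^* * (s * b + - b * a) =
   - ((b * b^*) * (a + 2)) by rewrite /s; ring.
rewrite oppr_ge0 mulrC pmulr_rle0 ?ltr_wpDl // => hle.
have /eqP : b * b^* = 0 by apply/eqP; rewrite eq_le mul_conjC_ge0 hle.
by rewrite mulf_eq0 conjC_eq0 orbb => /eqP.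
Qed.

Lemma psd_diag0 M i : psd M -> M i i = 0 -> forall j, M j i = 0 /\ M i j = 0.
Proof.
move=> hM hi j; have [hH _] := hM.
have hker := psd_form0_ker hM (etrans (form_evec M i i) hi).
have hji : M j i = 0 by rewrite -mulmx_evec hker mxE.
by split=> //; rewrite -ctrmx_entry // hji rmorph0.
Qed.

Definition restrict_mx (T : {set 'I_n}) M : 'M[C]_n :=
  \matrix_(i, j) if (i \in T) && (j \in T) then M i j else 0.

Lemma psd_restrict_mx T M : psd M -> psd (restrict_mx T M).
Proof.
case=> hH hpos; split.
  apply/matrixP => i j; rewrite !mxE.
  by case: (i \in T); case: (j \in T) => //=; rewrite ?rmorph0 // ctrmx_entry.
move=> v; pose w : 'cV[C]_n := \col_a (if a \in T then v a 0 else 0).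
have -> : (ctrcv v *m restrict_mx T M *m v) 0 0 = form M w w.
  rewrite -/(form _ _ _) !formE; apply: eq_bigr => a _; apply: eq_bigr => b _.
  rewrite !mxE; case: (a \in T); case: (b \in T) => /=;
    by rewrite ?rmorph0 ?mul0r ?mulr0 // mul0r.
exact: hpos.
Qed.

Definition pivot_mx P k : 'M[C]_n := \matrix_(i, j) (P i k * P k j / P k k).

Lemma form_pivot_mx P k u w :
  form (pivot_mx P k) u w = form P u (evec k) * form P (evec k) w / P k k.
Proof.
rewrite formE form_evecr form_evecl !mulr_suml; apply: eq_bigr => a _.
rewrite mxE mulr_sumr mulr_suml; apply: eq_bigr => b _.
by rewrite !mxE; ring.
Qed.

Section Pivot.
Variables (P : 'M[C]_n) (k : 'I_n).
Hypothesis hP : psd P.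

Let hkk : (P k k)^* = P k k.
Proof. by apply: geC0_conj; apply: psd_diag_ge0. Qed.

Let pivot_quad v :
  form (pivot_mx P k) v v = (form P (evec k) v)^* * form P (evec k) v / P k k.
Proof. by rewrite form_pivot_mx -(form_conj hP.1). Qed.

Lemma ctrmx_pivot_mx : ctrmx (pivot_mx P k) = pivot_mx P k.
Proof.
apply/matrixP => i j.
rewrite !mxE rmorphM fmorphV rmorphM /= hkk !(ctrmx_entry hP.1).
by rewrite [P k j * _]mulrC.
Qed.

Lemma psd_pivot_mx : psd (pivot_mx P k).
Proof.
split; first exact: ctrmx_pivot_mx.
move=> v; rewrite -/(form _ _ _) pivot_quad divr_ge0 ?psd_diag_ge0 //.
by rewrite mulrC mul_conjC_ge0.
Qed.

Lemma psd_sub_pivot_mx : psd (P - pivot_mx P k).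
Proof.
have [hk0|hk] := eqVneq (P k k) 0.
  have -> : pivot_mx P k = 0 by apply/matrixP => i j; rewrite !mxE hk0 invr0 mulr0.
  by rewrite subr0.
have [hH hpos] := hP; split.
  apply/matrixP => i j; rewrite !mxE rmorphB /= ctrmx_entry //.
  by move/matrixP: ctrmx_pivot_mx => /(_ i j); rewrite !mxE => ->.
move=> v; rewrite -/(form _ _ _) formBm pivot_quad.
set b := form P (evec k) v.
pose t := - b / P k k.
have := hpos (t *: evec k + v); rewrite -/(form _ _ _).
rewrite formDl !formDr form_evec -/b (form_conj hH (evec k) v) -/b.
have -> : t^* = - b^* / P k k by rewrite /t rmorphM fmorphV rmorphN /= hkk.
suff -> : - b^* / P k k * (t * P k k + b) + (t * b^* + form P v v) =
   form P v v - b^* * b / P k k by [].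
by rewrite /t; field.
Qed.

End Pivot.

End PsdMatrices.
Arguments evec {C n} m.

Lemma mxrank_outer_le1 (F : fieldType) m p (c : 'I_m -> F) (r : 'I_p -> F)
    (M : 'M[F]_(m, p)) :
  (forall a b, M a b = c a * r b) -> (\rank M <= 1)%N.
Proof.
move=> hM; have -> : M = (\col_a c a) *m (\row_b r b).
  by apply/matrixP => a b; rewrite hM mxE big_ord1 !mxE.
exact: leq_trans (mxrankM_maxl _ _) (rank_leq_col _).
Qed.

Lemma mxrank_le1_minor (F : fieldType) p q (M : 'M[F]_(p, q)) :
  (\rank M <= 1)%N -> forall a b c d, M a b * M c d = M a d * M c b.
Proof.
move=> hr a b c d; rewrite -(mulmx_base M).
move: (col_base M) (row_base M); case: (\rank M) hr => [|[|r]] // _ A B.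
  by rewrite !mxE !big_ord0 !mul0r.
by rewrite !mxE !big_ord1; ring.
Qed.

Section DualCone.
Variables (C : numClosedFieldType) (n : nat) (Rl : rel 'I_n).
Hypothesis hR : tolerance Rl.
Implicit Types (x p P : 'M[C]_n).

Let Rrefl i : Rl i i. Proof. exact: hR.1. Qed.
Let Rsym i j : Rl i j = Rl j i. Proof. exact: hR.2. Qed.

Lemma dual_cone_completion p : dual_cone Rl p ->
  exists2 P, psd P & forall i j, Rl i j -> P i j = p i j.
Proof.
case=> _ [N [hN hP]]; exists (p + N) => // i j hij.
by rewrite mxE hN // addr0.
Qed.

Lemma dual_coneP p P : in_E Rl p -> psd P ->
  (forall i j, Rl i j -> P i j = p i j) -> dual_cone Rl p.
Proof.
move=> hE hP hPp; split=> //; exists (P - p); split; last by rewrite addrC subrK.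
by move=> i j hij; rewrite !mxE hPp // subrr.
Qed.

Lemma dual_cone_conj p i j : dual_cone Rl p -> (p i j)^* = p j i.
Proof.
move=> hp; have [P [hH _] hPp] := dual_cone_completion hp.
case hij : (Rl i j).
  by rewrite -hPp // ctrmx_entry // hPp // Rsym.
have hji : ~~ Rl j i by rewrite Rsym hij.
by rewrite (hp.1 _ _ (negbT hij)) (hp.1 _ _ hji) rmorph0.
Qed.

Lemma dual_cone_diag_ge0 p i : dual_cone Rl p -> 0 <= p i i.
Proof.
move=> hp; have [P hP hPp] := dual_cone_completion hp.
by rewrite -hPp ?psd_diag_ge0.
Qed.

Lemma dual_cone_diag0 p i : dual_cone Rl p -> p i i = 0 ->
  forall j, p i j = 0 /\ p j i = 0.
Proof.
move=> hp hi j; have [P hP hPp] := dual_cone_completion hp.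
have [hji hij] := psd_diag0 hP (etrans (hPp _ _ (Rrefl i)) hi) j.
case hRij : (Rl i j); first by rewrite -!hPp // Rsym.
have hRji : ~~ Rl j i by rewrite Rsym hRij.
by rewrite (hp.1 _ _ (negbT hRij)) (hp.1 _ _ hRji).
Qed.

Lemma dual_cone_entry_neq0 p i j : dual_cone Rl p -> p i j != 0 ->
  [/\ Rl i j, p i i != 0 & p j j != 0].
Proof.
move=> hp hij; split.
- by apply: contraNT hij => /(hp.1 i j) ->.
- by apply: contraNneq hij => /(dual_cone_diag0 hp) /(_ j) [-> _].
- by apply: contraNneq hij => /(dual_cone_diag0 hp) /(_ i) [_ ->].
Qed.

Lemma dual_cone_diag_neq0 x : dual_cone Rl x -> x != 0 -> exists k, x k k != 0.
Proof.
move=> hx hx0; have [k hk | hdiag] := pickP (fun k => x k k != 0); first by exists k.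
case/eqP: hx0; apply/matrixP => i j; rewrite mxE.
by have [-> _] := dual_cone_diag0 hx (eqP (negbFE (hdiag i))) j.
Qed.

Definition restrict_rel M : 'M[C]_n := \matrix_(i, j) if Rl i j then M i j else 0.

Lemma extremal_clique_rank_le1 x : extremal_ray (dual_cone Rl) x ->
  forall K, clique Rl K -> (\rank (subsq K x) <= 1)%N.
Proof.
move=> [hx hx0 hext] K hK.
have [P hP hPx] := dual_cone_completion hx.
have [k hk] := dual_cone_diag_neq0 hx hx0.
have hPk : P k k != 0 by rewrite hPx.
pose y := restrict_rel (pivot_mx P k).
have hy : dual_cone Rl y.
  apply: dual_coneP (psd_pivot_mx k hP) _ => i j hij; first by rewrite mxE (negbTE hij).
  by rewrite !mxE hij.
have hz : dual_cone Rl (x - y).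
  apply: dual_coneP (psd_sub_pivot_mx k hP) _ => i j hij.
    by rewrite !mxE (negbTE hij) (hx.1 _ _ hij) subr0.
  by rewrite !mxE hij (hPx _ _ hij).
have hyz : in_ray x (y + (x - y)) by exists 1; rewrite ?ler01 // scale1r addrC subrK.
have [[al _ hyal] _] := hext _ _ hy hz hyz.
have hyk : y k k = P k k by rewrite !mxE Rrefl mulfK.
have hal0 : al != 0.
  by apply: contraNneq hPk => hal0; rewrite -hyk hyal hal0 scale0r mxE.
apply: (@mxrank_outer_le1 _ _ _ (fun a => al^-1 * P (enum_val a) k)
                           (fun b => P k (enum_val b) / P k k)) => a b.
have hab : Rl (enum_val a) (enum_val b).
  have [->|hne] := eqVneq (enum_val a) (enum_val b); first exact: Rrefl.
  by have /andP[_ ->] := hK _ _ (enum_valP a) (enum_valP b) hne.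
have : y (enum_val a) (enum_val b) = al * x (enum_val a) (enum_val b).
  by rewrite hyal mxE.
rewrite !mxE hab => h; rewrite -[x _ _](mulKf hal0) -h; ring.
Qed.

Lemma extremal_diag_support_connected x : extremal_ray (dual_cone Rl) x ->
  induced_connected Rl [set j | x j j != 0].
Proof.
move=> [hx _ hext] i0 j0 hi0 hj0.
set e := [rel a b | _]; apply/idPn => hi0j0.
pose A := [set m | connect e i0 m].
have hA i j : x i j != 0 -> (i \in A) = (j \in A).
  move=> hij; have [hRij hi hj] := dual_cone_entry_neq0 hx hij.
  have [<- //|hne] := eqVneq i j.
  have eij : e i j by rewrite /= !inE hi hj /gadj hne hRij.
  have eji : e j i by rewrite /= !inE hi hj /gadj eq_sym hne Rsym hRij.
  by rewrite !inE; apply/idP/idP => h; apply: connect_trans h (connect1 _).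
have [P hP hPx] := dual_cone_completion hx.
have hcone T : dual_cone Rl (restrict_mx T x).
  apply: dual_coneP (psd_restrict_mx T hP) _ => i j hij.
    by rewrite mxE (hx.1 _ _ hij) if_same.
  by rewrite !mxE hPx.
have hsum : in_ray x (restrict_mx A x + restrict_mx (~: A) x).
  exists 1; rewrite ?ler01 // scale1r; apply/matrixP => i j; rewrite !mxE !inE.
  have [->|hij] := eqVneq (x i j) 0; first by rewrite !if_same addr0.
  by move: (hA i j hij); rewrite !inE => ->; case: (connect e i0 j); rewrite ?addr0 ?add0r.
(* the A-part of x is a multiple of x, equal to x at i0 and to 0 at j0 *)
have [[al _ hxA] _] := hext _ _ (hcone A) (hcone (~: A)) hsum.
have hi0A : i0 \in A by rewrite inE connect0.
have hj0A : j0 \notin A by rewrite inE.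
have hal1 : al = 1.
  move/matrixP: hxA => /(_ i0 i0); rewrite !mxE hi0A => h.
  by apply: (mulIf (_ : x i0 i0 != 0)); rewrite ?mul1r -?h //; rewrite inE in hi0.
move/matrixP: hxA => /(_ j0 j0); rewrite !mxE (negbTE hj0A) hal1 mul1r => /esym/eqP.
by rewrite inE in hj0; rewrite (negbTE hj0).
Qed.

Section Summand.
Variables (x p q : 'M[C]_n) (l : C).
Hypotheses (hx : dual_cone Rl x) (hp : dual_cone Rl p) (hq : dual_cone Rl q).
Hypothesis hpq : p + q = l *: x.
Hypothesis hminor : forall i j, Rl i j -> x i i * x j j = x i j * x j i.

Let hpqE i j : p i j + q i j = l * x i j.
Proof. by move/matrixP: hpq => /(_ i j); rewrite !mxE. Qed.

Lemma summand_diag0 i : x i i = 0 -> p i i = 0.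
Proof.
move=> hi; have /eqP := hpqE i i; rewrite hi mulr0.
by rewrite paddr_eq0 ?dual_cone_diag_ge0 // => /andP[/eqP].
Qed.

(* As the 2x2 minor of x vanishes, v = x_ij e_i - x_ii e_j is isotropic for the
   completion Q1 + Q2 of l x, hence for Q1, and so lies in the kernel of Q1. *)
Lemma summand_edge i j : Rl i j -> p i i * x i j = p i j * x i i.
Proof.
move=> hij; have [<- //|hne] := eqVneq i j.
have hji : Rl j i by rewrite Rsym.
have [Q1 hQ1 hQ1p] := dual_cone_completion hp.
have [Q2 hQ2 hQ2p] := dual_cone_completion hq.
pose v := x i j *: evec i + (- x i i) *: evec j.
have hxii : (x i i)^* = x i i by apply: geC0_conj; apply: dual_cone_diag_ge0.
have hQ a b : Rl a b -> (Q1 + Q2) a b = l * x a b.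
  by move=> hab; rewrite mxE hQ1p // hQ2p // hpqE.
have hQv : form (Q1 + Q2) v v = 0.
  rewrite form_evec2 !hQ ?Rrefl // rmorphN /= hxii.
  transitivity (l * x i i * (x i i * x j j - x i j * x j i)); first by ring.
  by rewrite hminor // subrr mulr0.
have hQ1v : form Q1 v v = 0.
  move/eqP: hQv; rewrite formDm paddr_eq0 ?(hQ1.2 v) ?(hQ2.2 v) //.
  by case/andP => /eqP.
have /colP /(_ i) := psd_form0_ker hQ1 hQ1v.
rewrite mulmxDr -!scalemxAr mxE [X in X + _]mxE [X in _ + X]mxE !mulmx_evec.
rewrite !hQ1p ?Rrefl // mxE => h.
by rewrite -[RHS]addr0 -h; ring.
Qed.

Let c i := p i i / x i i.

Let summand_ratio i j : x i i != 0 -> Rl i j -> p i j = c i * x i j.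
Proof. by move=> hi hij; apply: (mulIf hi); rewrite -summand_edge // /c; field. Qed.

Let ratio_edge i j : x i i != 0 -> x j j != 0 -> gadj Rl i j -> c i = c j.
Proof.
move=> hi hj /andP[_ hij]; have hji : Rl j i by rewrite Rsym.
have hxji : x j i != 0.
  by apply: contraNneq (mulf_neq0 hi hj) => h; rewrite hminor // h mulr0.
have hc : (c i)^* = c i by apply: geC0_conj; rewrite divr_ge0 ?dual_cone_diag_ge0.
apply: (mulIf hxji).
rewrite -(summand_ratio hj hji) -(dual_cone_conj i j hp) (summand_ratio hi hij).
by rewrite rmorphM /= hc (dual_cone_conj i j hx).
Qed.

Lemma summand_in_ray : x != 0 -> induced_connected Rl [set j | x j j != 0] ->
  in_ray x p.
Proof.
move=> hx0 hconn; have [i0 hi0] := dual_cone_diag_neq0 hx hx0.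
have hc j : x j j != 0 -> c j = c i0.
  move=> hj; have := hconn i0 j; rewrite !inE => /(_ hi0 hj) /connectP [s hs ->].
  elim: s i0 hi0 hs => //= b s IH a ha /andP[/and3P[_ hb hab] hs].
  by rewrite inE in hb; rewrite IH // (ratio_edge ha hb hab).
exists (c i0); first by rewrite divr_ge0 ?dual_cone_diag_ge0.
apply/matrixP => i j; rewrite mxE.
case hij : (Rl i j); last by rewrite (hp.1 _ _ (negbT hij)) (hx.1 _ _ (negbT hij)) mulr0.
have [hi|hi] := eqVneq (x i i) 0; last by rewrite summand_ratio // hc.
have [-> _] := dual_cone_diag0 hp (summand_diag0 hi) j.
by have [-> _] := dual_cone_diag0 hx hi j; rewrite mulr0.
Qed.

End Summand.

End DualCone.

Section MaximalCliques.
Variables (n : nat) (Rl : rel 'I_n).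

Definition cliqueb (K : {set 'I_n}) : bool :=
  [forall a, forall b, (a \in K) ==> (b \in K) ==> (a != b) ==> gadj Rl a b].

Lemma cliqueP K : reflect (clique Rl K) (cliqueb K).
Proof.
apply: (iffP idP) => [/forallP hK a b ha hb hab | hK].
  by move: (hK a) => /forallP /(_ b); rewrite ha hb hab.
by apply/forallP => a; apply/forallP => b; apply/implyP => ha;
  apply/implyP => hb; apply/implyP; apply: hK.
Qed.

Lemma maximal_clique_exists K0 : clique Rl K0 ->
  exists2 K, maximal_clique Rl K & K0 \subset K.
Proof.
move=> hK0; pose cl K := cliqueb K && (K0 \subset K).
have hcl0 : cl K0 by rewrite /cl subxx andbT; apply/cliqueP.
have [K /andP[/cliqueP hK hsub] hmax] := arg_maxnP (fun K : {set 'I_n} => #|K|) hcl0.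
exists K => //; split=> // K' hK' hKK'; apply/eqP; rewrite eq_sym eqEcard hKK'.
by apply: hmax; rewrite /cl (subset_trans hsub hKK') andbT; apply/cliqueP.
Qed.

Lemma clique_pair i j : symmetric Rl -> Rl i j -> clique Rl [set i; j].
Proof.
move=> hsym hij a b; rewrite !inE => ha hb hne; rewrite /gadj hne /=.
by case/orP: ha hb hne => /eqP-> /orP[] /eqP->; rewrite ?eqxx // hsym.
Qed.

Lemma maximal_clique_rank_minor (C : numClosedFieldType) (x : 'M[C]_n) :
  symmetric Rl ->
  (forall K, maximal_clique Rl K -> (\rank (subsq K x) <= 1)%N) ->
  forall i j, Rl i j -> x i i * x j j = x i j * x j i.
Proof.
move=> hsym hrank i j hij.
have [K hK hsub] := maximal_clique_exists (clique_pair hsym hij).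
have hiK : i \in K by apply: (subsetP hsub); rewrite !inE eqxx.
have hjK : j \in K by apply: (subsetP hsub); rewrite !inE eqxx orbT.
have := mxrank_le1_minor (hrank K hK) (enum_rank_in hiK i) (enum_rank_in hiK i)
  (enum_rank_in hiK j) (enum_rank_in hiK j).
by rewrite !mxE !(enum_rankK_in hiK).
Qed.

End MaximalCliques.

Local Open Scope complex_scope.

Theorem mainTheorem3 (R : realType) (n : nat) (Rl : rel 'I_n)
    (hR : tolerance Rl) (hchordal : chordal (gadj Rl))
    (x : 'M[R[i]]_n) (hx : dual_cone Rl x) (hx0 : x != 0) :
  extremal_ray (dual_cone Rl) x <->
  (forall K : {set 'I_n}, maximal_clique Rl K -> (\rank (subsq K x) <= 1)%N) /\
  induced_connected Rl [set j | x j j != 0].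
Proof.
split=> [hext | [hrank hconn]].
  split; last exact (extremal_diag_support_connected hR hext).
  by move=> K [hK _]; exact (extremal_clique_rank_le1 hR hext hK).
have hminor := maximal_clique_rank_minor hR.2 hrank.
split=> // p q hp hq [l _ hpq]; split.
  exact (summand_in_ray hR hx hp hq hpq hminor hx0 hconn).
rewrite addrC in hpq; exact (summand_in_ray hR hx hq hp hpq hminor hx0 hconn).
Qed.
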